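(* Let $G=(V,E)$ be a graph with $n$ vertices, $m$ edges and $k(G)$ connected components, such that $h(G)$ is defined. Then for every integer $i$ with $i>n-k(G)-h(G)$, \[[x^i]T_G(x,1)=\binom{m-i-1}{n-k(G)-i}-\sum_{\substack{C\in \mathcal{C}(G),\\ |C|<h(G)}} \binom{m-|C|-i-1}{m-n+k(G)-1}.\]
   Context: $T_G(x,y)$ is the Tutte polynomial of $G$, i.e. $T_G(x,y)=\sum_{A\subseteq E}(x-1)^{r-rk(A)}(y-1)^{|A|-rk(A)}$ with $rk(A)=n-k(A)$, $k(A)$ the number of components of the spanning subgraph $(V,A)$, and $r=n-k(G)$. $[x^i]f(x)$ denotes the coefficient of $x^i$. $\mathcal{C}(G)$ is the set of (edge sets of) cycles of $G$, and $|C|$ is the length of the cycle. $h(G)$ is the minimum number of edges of a subgraph of $G$ of corank $2$ (i.e. an edge set $A$ with $|A|-rk(A)=2$, possibly disconnected) that contains no cut edges (no edge of $A$ is a bridge of $(V,A)$). *)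

(* Graphs are finite multigraphs (loops and parallel edges
   allowed): a finite vertex type V, a finite edge type E, and an endpoint map. *)
From mathcomp Require Import all_boot all_order all_algebra.
Set Implicit Arguments. Unset Strict Implicit. Unset Printing Implicit Defensive.
Import GRing.Theory Num.Theory.

Section Graph.
Variables (V E : finType) (ends : E -> V * V).

Definition adjA (A : {set E}) : rel V :=
  fun u v => [exists e in A, (ends e == (u, v)) || (ends e == (v, u))].

Definition ncomp (A : {set E}) : nat := n_comp (connect (adjA A)) V.

Definition rk (A : {set E}) : nat := #|V| - ncomp A.

Definition corank (A : {set E}) : nat := #|A| - rk A.

Definition is_bridge (A : {set E}) (e : E) : bool :=
  (e \in A) && (ncomp A < ncomp (A :\ e)).

(* degree of v in (V, C); a loop contributes 2 *)
Definition deg (C : {set E}) (v : V) : nat :=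
  \sum_(e in C) (((ends e).1 == v) + ((ends e).2 == v))%N.

Definition is_cycle (C : {set E}) : bool :=
  (C != set0) && [forall v, (deg C v == 0) || (deg C v == 2)] &&
  [forall u, forall v, ((0 < deg C u) && (0 < deg C v)) ==> connect (adjA C) u v].

(* A has corank 2 and no cut edges; h(G) is the minimum size of such A *)
Definition h_candidate (A : {set E}) : bool :=
  (corank A == 2) && [forall e in A, ~~ is_bridge A e].

Local Open Scope ring_scope.

(* Tutte polynomial T_G(x,y) as a polynomial in y with coefficients in Z[x] *)
Definition tutte : {poly {poly int}} :=
  \sum_(A : {set E})
     (('X - 1) ^+ (rk setT - rk A))%:P * ('X - 1) ^+ (#|A| - rk A)%N.

End Graph.

Local Open Scope ring_scope.

(* integer binomial: C(a,b) = 0 unless 0 <= b <= a *)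
Definition binz (a b : int) : int :=
  match a, b with
  | Posz a', Posz b' => ('C(a', b'))%:Z
  | _, _ => 0
  end.

Definition coefz (p : {poly int}) (i : int) : int :=
  match i with Posz j => p`_j | Negz _ => 0 end.

From Pilot Require Import Defs.
From mathcomp Require Import all_boot all_order all_algebra.
From mathcomp Require Import zify.
Import GRing.Theory Num.Theory.

(* At y = 1 only forests survive in the Tutte polynomial, a forest A contributing
   (x-1)^(r-|A|); for i > r - h(G) the coefficient [x^i] only sees forests with
   fewer than h(G) edges.  An edge set with fewer than h(G) edges has corank at
   most 1 (deleting bridges, then non-bridges, from a set of corank >= 2 leaves a
   smaller bridgeless set of corank 2), so it is either a forest or contains
   exactly one cycle, necessarily short.  Inclusion-exclusion over the short
   cycles therefore expresses the forest count through sums over all supersets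
   of a fixed short cycle, which the identity
   sum_k C(M,k) [x^i] (x-1)^(R-k) = C(M-i-1, R-i) evaluates. *)

Set Implicit Arguments. Unset Strict Implicit. Unset Printing Implicit Defensive.

Lemma sum_eq_mem (T : finType) (K : {set T}) a :
  \sum_(x in K) (a == x : nat) = (a \in K).
Proof.
have [aK|naK] := boolP (a \in K); last first.
  by rewrite big1 // => x xK; case: eqP => // ax; rewrite ax xK in naK.
rewrite (bigD1 a) //= eqxx big1 // => x /andP[_ xa].
by rewrite eq_sym (negbTE xa).
Qed.

Section Graph.
Variables (V E : finType) (ends : E -> V * V).
Local Notation adj := (adjA ends).
Local Notation deg := (deg ends).
Implicit Types (A B C D : {set E}) (e f : E) (x y z : V).

Lemma adjA_sym A : symmetric (adj A).
Proof.
move=> x y; apply/existsP/existsP => -[e /andP[eA /orP[]exy]];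
  by exists e; rewrite eA exy ?orbT.
Qed.

Lemma connect_adjA_sym A : connect_sym (adj A).
Proof. exact/sym_connect_sym/adjA_sym. Qed.

Local Notation csym := connect_adjA_sym.

Lemma adjA_ends A e : e \in A -> adj A (ends e).1 (ends e).2.
Proof. by move=> eA; apply/existsP; exists e; rewrite eA -surjective_pairing eqxx. Qed.

Lemma adjAS A B : A \subset B -> subrel (adj A) (adj B).
Proof.
move=> sAB x y /existsP[e /andP[eA exy]]; apply/existsP; exists e.
by rewrite (subsetP sAB _ eA).
Qed.

Lemma connect_adjAS A B : A \subset B -> subrel (connect (adj A)) (connect (adj B)).
Proof. by move=> sAB; apply: connect_sub => x y /(adjAS sAB)/connect1. Qed.

Definition comp_roots A := [set x | roots (adj A) x].

Lemma ncompE A : ncomp ends A = #|comp_roots A|.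
Proof.
have cc : connect (connect (adj A)) =2 connect (adj A).
  move=> x y; apply/idP/idP; first exact: connect_sub.
  by apply: connect_sub => u v /connect1/connect1.
by rewrite /ncomp (eq_n_comp cc); apply: eq_card => x; rewrite !inE andbT.
Qed.

Lemma comp_roots_coarsen A B : subrel (connect (adj A)) (connect (adj B)) ->
  comp_roots B = fingraph.root (adj B) @: comp_roots A.
Proof.
move=> sub; apply/setP => s; apply/idP/imsetP => [|[x _ ->]]; last first.
  by rewrite inE roots_root //; apply: csym.
rewrite inE => /eqP rs; exists (fingraph.root (adj A) s).
  by rewrite inE roots_root //; apply: csym.
rewrite -{1}rs; apply/esym/(fingraph.rootP (csym B)).
by rewrite (csym B); apply/sub/connect_root.
Qed.

Lemma leq_ncomp_coarsen A B : subrel (connect (adj A)) (connect (adj B)) ->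
  ncomp ends B <= ncomp ends A.
Proof. by move=> sub; rewrite !ncompE (comp_roots_coarsen sub) leq_imset_card. Qed.

Lemma ltn_ncomp_coarsen A B x y : subrel (connect (adj A)) (connect (adj B)) ->
  connect (adj B) x y -> ~~ connect (adj A) x y -> ncomp ends B < ncomp ends A.
Proof.
move=> sub cBxy ncAxy; rewrite !ncompE (comp_roots_coarsen sub).
set a := fingraph.root (adj A) x; set b := fingraph.root (adj A) y.
have rootA z : fingraph.root (adj A) z \in comp_roots A.
  by rewrite inE roots_root //; apply: csym.
have ba : b != a.
  by apply: contra ncAxy => /eqP eba; apply/(fingraph.rootP (csym A)); rewrite -/a -/b eba.
suff -> : fingraph.root (adj B) @: comp_roots A =
          fingraph.root (adj B) @: (comp_roots A :\ a).
  by rewrite (leq_ltn_trans (leq_imset_card _ _)) // [X in _ < X](cardsD1 a) rootA.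
apply/setP => s; apply/imsetP/imsetP => -[z zA ->]; last first.
  by exists z => //; move: zA; rewrite inE => /andP[].
have [za|zna] := eqVneq z a; last by exists z; rewrite // in_setD1 zna zA.
exists b; first by rewrite in_setD1 ba rootA.
apply/(fingraph.rootP (csym B)); rewrite za (csym B).
apply: (connect_trans (y := y)); first by rewrite (csym B) sub // connect_root.
apply: (connect_trans (y := x)); first by rewrite (csym B).
by rewrite sub // connect_root.
Qed.

Lemma deg_gt0_adjA A x y : adj A x y -> 0 < deg A x.
Proof.
case/existsP=> e /andP[eA exy]; rewrite /Defs.deg (bigD1 e) //=.
by case/orP: exy => /eqP ->; rewrite eqxx ?addnS.
Qed.

Lemma connect_isolated A x y : deg A x = 0 -> connect (adj A) x y -> y = x.
Proof.
move=> d0 /connectP[[|z p] //= /andP[/deg_gt0_adjA] + _ _].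
by rewrite d0.
Qed.

Lemma connect_setD1_subrel A e : e \in A ->
  connect (adj (A :\ e)) (ends e).1 (ends e).2 ->
  subrel (connect (adj A)) (connect (adj (A :\ e))).
Proof.
move=> eA cuv; apply: connect_sub => x y /existsP[f /andP[fA fxy]].
have [fe|fne] := eqVneq f e; last first.
  by apply/connect1/existsP; exists f; rewrite !inE fne fA.
move: fxy cuv; rewrite fe; case: (ends e) => u v /= /orP[]/eqP[-> ->] //.
by rewrite (csym (A :\ e)).
Qed.

Lemma bridgeE A e : e \in A ->
  is_bridge ends A e = ~~ connect (adj (A :\ e)) (ends e).1 (ends e).2.
Proof.
move=> eA; rewrite /is_bridge eA; apply/idP/idP => [lt|nc].
  apply: contraL lt => c; rewrite -leqNgt.
  exact/leq_ncomp_coarsen/connect_setD1_subrel.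
apply: ltn_ncomp_coarsen nc; first exact/connect_adjAS/subsetDl.
exact/connect1/adjA_ends.
Qed.

Lemma connect_setD1_cases A e x y : connect (adj A) x y ->
  [|| connect (adj (A :\ e)) x y, connect (adj (A :\ e)) x (ends e).1
    | connect (adj (A :\ e)) x (ends e).2].
Proof.
move=> /connectP[p]; elim/last_ind: p y => [|p z IH] y /=.
  by move=> _ ->; rewrite connect0.
rewrite rcons_path last_rcons => /andP[/IH/(_ erefl) + /existsP[f /andP[fA fz]]] ->.
case/or3P=> [cxy|->|->]; rewrite ?orbT //.
have [fe|fne] := eqVneq f e.
  by move: fz cxy; rewrite fe; case: (ends e) => u v /orP[]/eqP[-> ->] ->; rewrite ?orbT.
by rewrite (connect_trans cxy) // connect1 //; apply/existsP; exists f; rewrite !inE fne fA.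
Qed.

(* Restoring e can only merge the components of its two ends, so the root map
   of A is injective on the roots of A :\ e other than that of (ends e).2. *)
Lemma ncomp_setD1_le A e : ncomp ends (A :\ e) <= (ncomp ends A).+1.
Proof.
rewrite !ncompE; set B := A :\ e.
set ru := fingraph.root (adj B) (ends e).1; set rv := fingraph.root (adj B) (ends e).2.
have merged r1 r2 : r1 \in comp_roots B :\ rv -> r2 \in comp_roots B ->
    connect (adj A) r1 r2 -> r1 = r2 \/ r1 = ru.
  rewrite !inE => /andP[n1 /eqP r1r] /eqP r2r /(connect_setD1_cases e) /or3P[] c.
  - by left; rewrite -r1r -r2r; apply/(fingraph.rootP (csym B)).
  - by right; rewrite -r1r; apply/(fingraph.rootP (csym B)).
  - by move: n1; rewrite -r1r (fingraph.rootP (csym B) c) eqxx.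
have inj : {in comp_roots B :\ rv &, injective (fingraph.root (adj A))}.
  move=> r1 r2 i1 i2 /(fingraph.rootP (csym A)) c.
  have i1' : r1 \in comp_roots B by move: i1; rewrite in_setD1 => /andP[].
  have i2' : r2 \in comp_roots B by move: i2; rewrite in_setD1 => /andP[].
  case: (merged _ _ i1 i2' c) => // r1u.
  by case: (merged _ _ i2 i1' (etrans (csym A _ _) c)) => ->.
rewrite (cardsD1 rv) -add1n leq_add ?leq_b1 // -(card_in_imset inj).
apply/subset_leq_card/subsetP => _ /imsetP[x _ ->].
by rewrite inE roots_root //; apply: csym.
Qed.

Lemma ncomp_le_card A : ncomp ends A <= #|V|.
Proof. by rewrite ncompE max_card. Qed.

Lemma ncomp_set0 : ncomp ends set0 = #|V|.
Proof.
rewrite ncompE -cardsT; apply: eq_card => x; rewrite !inE.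
by apply/eqP/connect_isolated/connect_root; rewrite /Defs.deg big_set0.
Qed.

Lemma ncompS A B : A \subset B -> ncomp ends B <= ncomp ends A.
Proof. by move/connect_adjAS/leq_ncomp_coarsen. Qed.

Lemma rkS A B : A \subset B -> rk ends A <= rk ends B.
Proof. by move/ncompS; rewrite /rk; lia. Qed.

Lemma rk_setD1 A e : rk ends A <= (rk ends (A :\ e)).+1.
Proof.
have := ncomp_setD1_le A e; have := ncomp_le_card A; have := ncomp_le_card (A :\ e).
rewrite /rk; lia.
Qed.

Lemma rk_subset_add A B : A \subset B -> rk ends B <= rk ends A + #|B :\: A|.
Proof.
move=> sAB; move Dn: #|B :\: A| => n; elim: n B sAB Dn => [|n IH] B sAB Dn.
  suff -> : B = A by rewrite addn0.
  by apply/eqP; rewrite eqEsubset sAB andbT -setD_eq0 -cards_eq0 Dn.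
have /set0Pn[e eBA] : B :\: A != set0 by rewrite -card_gt0 Dn.
move: (eBA); rewrite inE => /andP[eA _].
have sAB' : A \subset B :\ e by rewrite subsetD1 sAB eA.
have Dn' : #|(B :\ e) :\: A| = n.
  by move: Dn; rewrite (cardsD1 e) eBA setDDl setUC -setDDl => -[].
by apply: leq_trans (rk_setD1 B e) _; rewrite addnS ltnS IH.
Qed.

Lemma rk_le_card A : rk ends A <= #|A|.
Proof.
by have := rk_subset_add (sub0set A); rewrite setD0 /rk ncomp_set0 subnn.
Qed.

Lemma rk_forest A : corank ends A = 0 -> rk ends A = #|A|.
Proof. by have := rk_le_card A; rewrite /corank; lia. Qed.

Lemma corankS A B : A \subset B -> corank ends A <= corank ends B.
Proof.
move=> sAB; have := rk_subset_add sAB; have := rk_le_card A.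
have : #|B| = #|A| + #|B :\: A| by rewrite -(cardsID A B) (setIidPr sAB).
rewrite /corank; lia.
Qed.

Lemma corank_setD1_bridge A e : is_bridge ends A e ->
  corank ends A <= corank ends (A :\ e).
Proof.
case/andP=> eA lt; have := ncomp_le_card (A :\ e); have := ncomp_le_card A.
rewrite /corank /rk (cardsD1 e A) eA; lia.
Qed.

Lemma corank_setD1_nonbridge A e : e \in A -> ~~ is_bridge ends A e ->
  corank ends A = (corank ends (A :\ e)).+1.
Proof.
move=> eA; rewrite /is_bridge eA -leqNgt => le.
have := ncompS (subsetDl A [set e]); have := rk_le_card (A :\ e).
rewrite /corank /rk (cardsD1 e A) eA; lia.
Qed.

Lemma h_candidate_bounds A : h_candidate ends A ->
  #|A| <= rk ends setT + 2 /\ rk ends setT + 2 <= #|E|.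
Proof.
case/andP=> /eqP cA2 _; have := corankS (subsetT A); have := rkS (subsetT A).
by move: cA2; rewrite /corank cardsT; lia.
Qed.

Lemma bridgeless_subset A : exists2 B : {set E}, B \subset A &
  corank ends A <= corank ends B /\ {in B, forall e, ~~ is_bridge ends B e}.
Proof.
elim: {A}_.+1 {-2}A (ltnSn #|A|) => // n IH A leAn.
have [/exists_inP[e eA br]|nb] := boolP [exists e in A, is_bridge ends A e]; last first.
  by exists A => //; split=> // e eA; apply: contra nb => br; apply/exists_inP; exists e.
have [|B sB [cB nbB]] := IH (A :\ e); first by move: leAn; rewrite (cardsD1 e A) eA.
exists B; first exact: subset_trans sB (subsetDl _ _).
by split; first exact: leq_trans (corank_setD1_bridge br) cB.
Qed.

Lemma h_candidate_subset A : 2 <= corank ends A ->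
  exists2 B : {set E}, B \subset A & h_candidate ends B.
Proof.
elim: {A}_.+1 {-2}A (ltnSn #|A|) => // n IH A leAn cA.
have [B sBA [cAB nbB]] := bridgeless_subset A.
have [cB2|cBn2] := eqVneq (corank ends B) 2.
  by exists B => //; rewrite /h_candidate cB2; apply/forall_inP.
have /set0Pn[e eB] : B != set0.
  by apply/eqP => B0; move: cAB cA cBn2; rewrite B0 /corank cards0; lia.
have ltBn : #|B :\ e| < n.
  by have := subset_leq_card sBA; rewrite (cardsD1 e B) eB; lia.
have cBe : 2 <= corank ends (B :\ e).
  by move: cAB cBn2; rewrite (corank_setD1_nonbridge eB (nbB e eB)); lia.
have [C sC candC] := IH _ ltBn cBe.
by exists C => //; apply: subset_trans sC (subset_trans (subsetDl _ _) sBA).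
Qed.

Lemma corank_le1_small h A : (forall B, h_candidate ends B -> h <= #|B|) ->
  #|A| < h -> corank ends A <= 1.
Proof.
move=> hmin hA; rewrite leqNgt; apply/negP => /h_candidate_subset[B sBA /hmin].
by have := subset_leq_card sBA; lia.
Qed.

Lemma sum_deg_set B (K : {set V}) :
  \sum_(x in K) deg B x = \sum_(e in B) (((ends e).1 \in K) + ((ends e).2 \in K)).
Proof.
rewrite /Defs.deg exchange_big /=; apply: eq_bigr => e _.
by rewrite big_split /= !sum_eq_mem.
Qed.

Lemma handshake B : \sum_x deg B x = #|B| * 2.
Proof.
rewrite -(eq_bigl _ _ (in_setT (T := V))) sum_deg_set -sum_nat_const.
by apply: eq_bigr => e _; rewrite !inE.
Qed.

Lemma deg_setD1 B f x : f \in B ->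
  deg B x = deg (B :\ f) x + (((ends f).1 == x) + ((ends f).2 == x)).
Proof.
move=> fB; rewrite /Defs.deg (bigD1 f) //= addnC; congr (_ + _).
by apply: eq_bigl => e; rewrite !inE andbC.
Qed.

Lemma cycle_connect_setD1 C f : is_cycle ends C -> f \in C ->
  connect (adj (C :\ f)) (ends f).1 (ends f).2.
Proof.
case/andP=> /andP[_ /forallP deg02] _ fC; apply: contraT => nc.
set D := C :\ f; set K := [set x | connect (adj D) (ends f).1 x].
have evenC : 2 %| \sum_(x in K) deg C x.
  by apply: dvdn_sum => x _; case/orP: (deg02 x) => /eqP ->.
have evenD : 2 %| \sum_(x in K) deg D x.
  rewrite sum_deg_set; apply: dvdn_sum => e eD.
  suff -> : ((ends e).2 \in K) = ((ends e).1 \in K) by rewrite addnn -mul2n dvdn_mulr.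
  rewrite !inE; have de := connect1 (adjA_ends eD); apply/idP/idP => c.
    by apply: connect_trans c _; rewrite (csym D).
  exact: connect_trans c de.
have splitC : \sum_(x in K) deg C x = \sum_(x in K) deg D x + 1.
  have -> : 1 = ((ends f).1 \in K) + ((ends f).2 \in K).
    by rewrite !inE connect0 (negbTE nc).
  rewrite -!sum_eq_mem -!big_split /=; apply: eq_bigr => x _.
  by rewrite (deg_setD1 x fC) addnA.
by move: evenC evenD; rewrite splitC; move: (\sum_(x in K) _) => s; lia.
Qed.

Lemma cycle_nonbridge C D f : is_cycle ends C -> C \subset D -> f \in C ->
  ~~ is_bridge ends D f.
Proof.
move=> cyc sCD fC; rewrite bridgeE ?(subsetP sCD) // negbK.
exact: connect_adjAS (setSD _ sCD) _ _ (cycle_connect_setD1 cyc fC).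
Qed.

Lemma cycle_corank_gt0 C D : is_cycle ends C -> C \subset D -> 0 < corank ends D.
Proof.
move=> cyc sCD; have /set0Pn[f fC] : C != set0 by case/andP: cyc => /andP[].
by rewrite (corank_setD1_nonbridge (subsetP sCD _ fC) (cycle_nonbridge cyc sCD fC)).
Qed.

Lemma two_cycles_corank C1 C2 D : is_cycle ends C1 -> is_cycle ends C2 ->
  C1 \subset D -> C2 \subset D -> C1 != C2 -> 2 <= corank ends D.
Proof.
wlog /subsetPn[e e1 e2] : C1 C2 / ~~ (C1 \subset C2).
  move=> IH c1 c2 s1 s2 ne; have [s12|] := boolP (C1 \subset C2); last by move/IH; apply.
  apply: (IH C2 C1) => //; last by rewrite eq_sym.
  by apply: contra ne => s21; rewrite eqEsubset s12 s21.
move=> c1 c2 s1 s2 _.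
rewrite (corank_setD1_nonbridge (subsetP s1 _ e1) (cycle_nonbridge c1 s1 e1)) ltnS.
by apply: (cycle_corank_gt0 c2); rewrite subsetD1 s2 e2.
Qed.

(* A vertex of degree 1 becomes isolated when its edge is deleted, so that
   edge would be a bridge. *)
Lemma bridgeless_deg_ge2 B x : {in B, forall e, ~~ is_bridge ends B e} ->
  0 < deg B x -> 2 <= deg B x.
Proof.
move=> nb; rewrite leq_eqVlt orbC => /orP[//|/eqP d1].
have /forall_inPn[e eB inc] :
    ~~ [forall e in B, ((ends e).1 == x) + ((ends e).2 == x) == 0].
  by rewrite -sum_nat_eq0 -/(deg B x) -d1.
move: (nb e eB) (deg_setD1 x eB); rewrite bridgeE // negbK -d1.
case: (ends e) inc => u v /=.
have [->|ux] := eqVneq u x; have [->|vx] := eqVneq v x; rewrite ?eqxx //= => _ c.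
- by rewrite addn2.
- by rewrite addn0 addn1 => -[/esym d0]; rewrite (connect_isolated d0 c) eqxx in vx.
rewrite add0n addn1 (csym (B :\ e)) in c * => -[/esym d0].
by rewrite (connect_isolated d0 c) eqxx in ux.
Qed.

Lemma bridgeless_corank1_cycle B : corank ends B = 1 ->
  {in B, forall e, ~~ is_bridge ends B e} -> is_cycle ends B.
Proof.
move=> cB1 nb; set N := [set x | 0 < deg B x]; set RN := comp_roots B :&: N.
have rootN x : 0 < deg B x -> fingraph.root (adj B) x \in RN.
  move=> dx; rewrite !inE (roots_root (csym B)) /= lt0n; apply/eqP => d0.
  have xr := connect_isolated d0 (etrans (csym B _ _) (connect_root _ x)).
  by rewrite xr d0 in dx.
have ncompB : ncomp ends B = #|~: N| + #|RN|.
  suff isoR : ~: N \subset comp_roots B.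
    by rewrite ncompE -(cardsID N) addnC setDE (setIidPr isoR).
  apply/subsetP => x; rewrite !inE -eqn0Ngt => /eqP d0.
  by apply/eqP/connect_isolated/connect_root.
have deg2 x : x \in N -> 2 <= deg B x by rewrite inE; exact: bridgeless_deg_ge2.
have sumN : #|B| * 2 = \sum_(x in N) (deg B x - 2) + #|N| * 2.
  rewrite -handshake (bigID [pred x | x \in N]) /= [X in _ + X]big1 ?addn0; last first.
    by move=> x; rewrite inE -eqn0Ngt => /eqP.
  by rewrite -sum_nat_const -big_split; apply: eq_bigr => x /deg2 /=; lia.
have /set0Pn[e eB] : B != set0.
  by apply/eqP => B0; move: cB1; rewrite B0 /corank cards0.
have RN_gt0 : 0 < #|RN|.
  apply/card_gt0P; exists (fingraph.root (adj B) (ends e).1).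
  exact/rootN/deg_gt0_adjA/adjA_ends.
(* Corank 1 gives |B| = |N| - |RN| + 1, while 2|B| >= 2|N| by the handshake
   lemma: so there is one nontrivial component and every degree in it is 2. *)
have [RN1 ex0] : #|RN| = 1 /\ \sum_(x in N) (deg B x - 2) = 0.
  have := cardsC N; have := ncomp_le_card B.
  by move: cB1 sumN; rewrite /corank /rk ncompB; lia.
have deg_eq2 x : x \in N -> deg B x = 2.
  move=> xN; have := deg2 x xN.
  by move/eqP: ex0; rewrite sum_nat_eq0 => /forall_inP/(_ x xN)/eqP; lia.
apply/andP; split; [apply/andP; split|].
- by apply/set0Pn; exists e.
- apply/forallP => x; have [xN|] := boolP (x \in N); first by rewrite deg_eq2 ?orbT.
  by rewrite inE -eqn0Ngt => ->.
apply/forallP => u; apply/forallP => v; apply/implyP => /andP[/rootN ru /rootN rv].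
move/eqP: RN1 => /cards1P[r RNr]; apply/(fingraph.rootP (csym B)).
by move: ru rv; rewrite RNr !inE => /eqP -> /eqP ->.
Qed.

Lemma forest_or_unique_cycle h A : (forall B, h_candidate ends B -> h <= #|B|) ->
  #|A| < h ->
  (corank ends A == 0) + #|[set C | is_cycle ends C && (#|C| < h) && (C \subset A)]| = 1.
Proof.
move=> hmin hA; set S := [set C | _].
have [c0|c0] := eqVneq (corank ends A) 0.
  suff -> : S = set0 by rewrite cards0.
  apply/setP => C; rewrite !inE; apply/negP => /andP[/andP[cyc _] sCA].
  by have := cycle_corank_gt0 cyc sCA; rewrite c0.
have [B sBA [cAB nbB]] := bridgeless_subset A.
have hB : #|B| < h by apply: leq_ltn_trans (subset_leq_card sBA) hA.
have cycB : is_cycle ends B.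
  by apply: bridgeless_corank1_cycle nbB; have := corank_le1_small hmin hB; lia.
suff -> : S = [set B] by rewrite cards1.
apply/setP => C; rewrite !inE; apply/idP/eqP => [|->]; last by rewrite cycB hB sBA.
case/andP=> /andP[cyc _] sCA; apply/eqP; apply: contraT => neCB.
have := two_cycles_corank cyc cycB sCA sBA neCB.
by have := corank_le1_small hmin hA; lia.
Qed.

Lemma sum_forests_incl_excl (R : zmodType) h (W : nat -> R) :
  (forall B, h_candidate ends B -> h <= #|B|) -> (forall j, h <= j -> W j = 0%R) ->
  (\sum_(A : {set E}) W #|A| *+ (corank ends A == 0) =
   \sum_(A : {set E}) W #|A|
   - \sum_(C | is_cycle ends C && (#|C| < h)%N) \sum_(A : {set E} | C \subset A) W #|A|)%R.
Proof.
move=> hmin hW; rewrite (exchange_big_dep predT) //= -sumrB; apply: eq_bigr => A _.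
rewrite sumr_const; have [hA|/hW->] := ltnP #|A| h; last by rewrite !mul0rn subrr.
have := forest_or_unique_cycle hmin hA; set S := [set C | _].
have -> : #|[pred C | is_cycle ends C && (#|C| < h) & C \subset A]| = #|S|.
  by apply: eq_card => C; rewrite !inE.
case: (corank ends A == 0); rewrite ?add1n ?add0n.
  by case=> ->; rewrite mulr0n subr0.
by move=> ->; rewrite mulr0n subrr.
Qed.

End Graph.

Local Open Scope ring_scope.

Section SubsetSums.
Variables (R : nmodType) (T : finType).

Lemma sum_subsets (F : nat -> R) (D : {set T}) :
  \sum_(B : {set T} | B \subset D) F #|B| = \sum_(k < #|D|.+1) F k *+ 'C(#|D|, k).
Proof.
rewrite (partition_big (fun B : {set T} => inord #|B| : 'I_#|D|.+1) predT) //=.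
apply: eq_bigr => k _; rewrite -cards_draws -sumr_const.
have leD (B : {set T}) : B \subset D -> (#|B| < #|D|.+1)%N.
  by move=> sBD; rewrite ltnS subset_leq_card.
apply: eq_big => [B|B /andP[sBD /eqP <-]]; last by rewrite inordK ?leD.
rewrite !inE; case sBD: (B \subset D) => //=.
apply/eqP/eqP => [<-|kB]; first by rewrite inordK ?leD.
by apply: val_inj; rewrite /= inordK ?leD.
Qed.

Lemma sum_supsets (F : nat -> R) (C : {set T}) :
  \sum_(A : {set T} | C \subset A) F #|A| =
  \sum_(k < (#|T| - #|C|).+1) F (#|C| + k) *+ 'C(#|T| - #|C|, k).
Proof.
have -> : (#|T| - #|C| = #|~: C|)%N by rewrite -(cardsC C) addKn.
rewrite -(sum_subsets (fun k => F (#|C| + k)%N) (~: C)).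
rewrite (reindex_onto (fun B => B :|: C) (fun A => A :\: C)) /=; last first.
  by move=> A sCA; rewrite setDE setUIl [~: C :|: C]setUC setUCr setIT (setUidPl sCA).
apply: eq_big => [B|B]; rewrite subsetUr setDUl setDv setU0 /=.
  by rewrite -disjoints_subset; apply/eqP/setDidPl.
move=> /eqP/setDidPl dBC.
by rewrite cardsU (disjoint_setI0 dBC) cards0 subn0 addnC.
Qed.

End SubsetSums.

Lemma coef_Xsub1_exp_high n i : (n < i)%N -> (('X - 1 : {poly int}) ^+ n)`_i = 0.
Proof. by move=> lt; rewrite nth_default // -polyC1 size_exp_XsubC. Qed.

Definition binXsub1_sum (M R : nat) : {poly int} :=
  \sum_(j < R.+1) ('X - 1) ^+ (R - j) *+ 'C(M, j).

Lemma binXsub1_sumSS M R :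
  binXsub1_sum M.+1 R.+1 = binXsub1_sum M R.+1 + binXsub1_sum M R.
Proof.
rewrite /binXsub1_sum big_ord_recl [in X in _ = X + _]big_ord_recl /= !bin0 !subn0.
rewrite -addrA; congr (_ + _).
rewrite -big_split /=; apply: eq_bigr => j _.
by rewrite /bump /= add1n subSS binS mulrnDr.
Qed.

Lemma binXsub1_sum_pred R : binXsub1_sum R.+1 R = \poly_(k < R.+1) 1.
Proof.
have nz : ('X - 1 : {poly int}) != 0 by rewrite -polyC1 polyXsubC_eq0.
apply: (mulfI nz); rewrite poly_def; under eq_bigr do rewrite scale1r.
rewrite -subrX1 -[in X in X ^+ _](subrK 1 'X) exprDn big_ord_recr /=.
rewrite subnn expr0 expr1n mulr1 binn mulr1n addrK.
rewrite /binXsub1_sum mulr_sumr; apply: eq_bigr => j _.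
by rewrite expr1n mulr1 mulrnAr -exprS subSn // -ltnS.
Qed.

Lemma coef_binXsub1_sum_high M R i : (R < i)%N -> (binXsub1_sum M R)`_i = 0.
Proof.
move=> lt; rewrite coef_sum big1 // => j _.
by rewrite coefMn coef_Xsub1_exp_high ?mul0rn //; lia.
Qed.

Lemma coef_binXsub1_sum M R i : (R < M)%N -> (i <= R)%N ->
  (binXsub1_sum M R)`_i = 'C(M - i - 1, R - i)%:R.
Proof.
elim: M R i => [|M IH] R i // RM iR.
have [eRM|RnM] := eqVneq R M.
  by subst R; rewrite binXsub1_sum_pred coef_poly ltnS iR subn1 subSn // binn.
case: R RM iR RnM => [|R] RM iR RnM.
  by move: iR; rewrite leqn0 => /eqP->; rewrite /binXsub1_sum big_ord1 coefMn coefC !bin0.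
have RM' : (R.+1 < M)%N by lia.
rewrite binXsub1_sumSS coefD (IH _ _ RM' iR).
have [iR'|Ri] := leqP i R; last first.
  have -> : i = R.+1 by lia.
  by rewrite coef_binXsub1_sum_high // addr0 !subnn !bin0.
rewrite (IH _ _ (ltnW RM') iR') -natrD subSn // -binS.
by congr (_%:R); congr 'C(_, _); lia.
Qed.

Lemma binz_nat (x y : int) (a b : nat) : x = a%:Z -> y = b%:Z -> binz x y = 'C(a, b)%:R.
Proof. by move=> -> ->; rewrite natz. Qed.

Lemma binz_neg_r (x y : int) : y < 0 -> binz x y = 0.
Proof. by case: y => // n; case: x. Qed.

Lemma binz_sym (x y : int) : binz x y = binz x (x - y).
Proof.
case: x => [a|//]; case: y => [b|b]; last first.
  by rewrite [RHS](binz_nat (a := a) (b := (a + b.+1)%N)) ?bin_small //; lia.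
have [ba|ab] := leqP b a; last by rewrite [RHS]binz_neg_r /= ?bin_small //; lia.
by rewrite [RHS](binz_nat (a := a) (b := (a - b)%N)) ?bin_sub ?natz //; lia.
Qed.

Lemma coef_binXsub1_sum_binz M R n : (R < M)%N ->
  (binXsub1_sum M R)`_n = binz (M%:Z - n%:Z - 1) (R%:Z - n%:Z).
Proof.
move=> RM; have [nR|Rn] := leqP n R; last first.
  by rewrite coef_binXsub1_sum_high // binz_neg_r //; lia.
by rewrite coef_binXsub1_sum // (binz_nat (a := (M - n - 1)%N) (b := (R - n)%N)); lia.
Qed.

(* [x^i] (x-1)^(r-j) on the range j <= r of forest sizes; at i = -1 it is the
   indicator of j = r+1, the choice for which sum_binom_weight still holds, so
   that the vanishing coefficient [x^-1] is handled like the others. *)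
Definition weight (r : nat) (i : int) (j : nat) : int :=
  match i with
  | Posz n => if (j <= r)%N then (('X - 1) ^+ (r - j))`_n else 0
  | Negz _ => (j == r.+1)%:R
  end.

Lemma weight_eq0 r i j : r%:Z - j%:Z < i -> weight r i j = 0.
Proof.
case: i => [n|n] /= lt; last by rewrite (_ : j == r.+1 = false) //; apply/eqP; lia.
by case: leqP => // jr; rewrite coef_Xsub1_exp_high //; lia.
Qed.

Lemma sum_binom_weight r i c M : -1 <= i -> (r < M + c)%N ->
  \sum_(k < M.+1) weight r i (c + k) *+ 'C(M, k) = binz (M%:Z - i - 1) (r%:Z - c%:Z - i).
Proof.
case: i => [n|n] i_ge rMc /=.
  have [cr|rc] := leqP c r; last first.
    rewrite binz_neg_r; last lia.
    by rewrite big1 // => k _; rewrite leqNgt ltn_addr ?mul0rn.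
  have -> : r%:Z - c%:Z - n%:Z = (r - c)%N%:Z - n%:Z by lia.
  rewrite -coef_binXsub1_sum_binz; last lia.
  rewrite coef_sum (big_ord_widen M.+1 (fun j => (('X - 1) ^+ (r - c - j) *+ 'C(M, j))`_n));
    last lia.
  rewrite [RHS]big_mkcond; apply: eq_bigr => k _ /=.
  rewrite coefMn (_ : (c + k <= r)%N = (k < (r - c).+1)%N); last lia.
  by case: ifP; rewrite ?mul0rn // subnDA.
have -> : n = 0%N by lia.
have [cr|rc] := leqP c r.+1; last first.
  rewrite binz_neg_r; last lia.
  by rewrite big1 // => k _; rewrite (_ : c + k == r.+1 = false) ?mul0rn //; apply/eqP; lia.
have k0M : (r.+1 - c < M.+1)%N by lia.
rewrite (bigD1 (Ordinal k0M)) //= subnKC // eqxx mulr1n big1 ?addr0.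
  by rewrite (binz_nat (a := M) (b := (r.+1 - c)%N)) //; lia.
move=> k /eqP neq; rewrite (_ : c + k == r.+1 = false) ?mul0rn //.
by apply/eqP => ckr; apply: neq; apply: val_inj => /=; lia.
Qed.

Lemma sum_supsets_weight (T : finType) (C : {set T}) r i : -1 <= i -> (r < #|T|)%N ->
  \sum_(A : {set T} | C \subset A) weight r i #|A| =
  binz (#|T|%:Z - #|C|%:Z - i - 1) (r%:Z - #|C|%:Z - i).
Proof.
move=> i_ge rT; have CT : (#|C| <= #|T|)%N by apply: max_card.
rewrite sum_supsets sum_binom_weight //; last lia.
by congr binz; lia.
Qed.

Lemma coefz_tutte1 (V E : finType) (ends : E -> V * V) i :
  coefz (tutte ends).[1] i =
  \sum_(A : {set E}) weight (rk ends setT) i #|A| *+ (corank ends A == 0%N).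
Proof.
have forest_le A : corank ends A = 0%N -> (#|A| <= rk ends setT)%N.
  by move=> cA; rewrite -(rk_forest cA) rkS ?subsetT.
case: i => [n|n] /=; last first.
  apply/esym/big1 => A _.
  have [/forest_le Ar|] := eqVneq (corank ends A) 0%N; last by rewrite mulr0n.
  by rewrite (_ : #|A| == _ = false) //; apply/eqP; lia.
rewrite /tutte horner_sum coef_sum; apply: eq_bigr => A _.
rewrite hornerM hornerC horner_exp !hornerE subrr expr0n /= -/(corank ends A).
have [cA|] := eqVneq (corank ends A) 0%N; last by rewrite mulr0 mulr0n coef0.
by rewrite mulr1 mulr1n forest_le // (rk_forest cA).
Qed.

Theorem corollary3p7 (V E : finType) (ends : E -> V * V) (h : nat)
  (h_def : exists2 A : {set E}, h_candidate ends A & #|A| = h)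
  (h_min : forall A : {set E}, h_candidate ends A -> (h <= #|A|)%N)
  (i : int)
  (hi : (#|V|%:Z - (ncomp ends setT)%:Z - h%:Z < i)) :
  coefz (tutte ends).[1] i =
    binz (#|E|%:Z - i - 1) (#|V|%:Z - (ncomp ends setT)%:Z - i)
    - \sum_(C : {set E} | is_cycle ends C && (#|C| < h)%N)
        binz (#|E|%:Z - #|C|%:Z - i - 1)
             (#|E|%:Z - #|V|%:Z + (ncomp ends setT)%:Z - 1).
Proof.
set r := rk ends setT.
have rE : #|V|%:Z - (ncomp ends setT)%:Z = r%:Z.
  by have := ncomp_le_card ends setT; rewrite /r /rk; lia.
have [A0 candA0 hA0] := h_def; have [hr rm] := h_candidate_bounds candA0.
rewrite -/r hA0 in hr rm.
rewrite rE in hi *.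
have i_ge : -1 <= i by move: hi hr; clear; lia.
have hW j : (h <= j)%N -> weight r i j = 0.
  by move=> hj; apply: weight_eq0; move: hi hj; clear; lia.
rewrite coefz_tutte1 -/r (sum_forests_incl_excl h_min hW).
have -> : \sum_(A : {set E}) weight r i #|A| =
          \sum_(A : {set E} | set0 \subset A) weight r i #|A|.
  by apply: eq_bigl => A; rewrite sub0set.
have rm' : (r < #|E|)%N by move: rm; clear; lia.
rewrite sum_supsets_weight // cards0 !subr0; congr (_ - _).
apply: eq_bigr => C _; rewrite sum_supsets_weight // binz_sym; congr binz.
by move: rE; clear; lia.
Qed.
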